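(* If $(S,K,I)$ is a split graph, then the factor graph $\Phi(S)$ cannot contain an induced path $v_1v_2v_3v_4$ with $\sigma_{23}=1$ and $d_1\geq d_2\leq d_4$.
   Context: A split graph $(S,K,I)$ is a graph $S$ together with a fixed partition $V(S)=K\dot\cup I$, where $K$ is a clique and $I$ is an independent set. For a vertex $v_i$ of $S$, $N_i$ denotes its open neighborhood in $S$ and $d_i=|N_i|$; $\eta_{uv}=|N_u\cap N_v|$. The factor graph $\Phi(S)$ is the loopless multigraph with vertex set $I$ in which, for distinct $u,v\in I$, there is one edge joining $u$ and $v$ for each 2-switch of $S$ acting on $u$ and $v$ (a 2-switch replaces edges $ab,cd$ with $ac,bd$ when $ab,cd\in E(S)$ and $ac,bd\notin E(S)$); equivalently, the multiplicity of $uv$ is $\sigma_{uv}=(d_u-\eta_{uv})(d_v-\eta_{uv})$, and $u,v$ are adjacent iff $\sigma_{uv}>0$; $\sigma_{ij}$ denotes $\sigma_{v_iv_j}$. An induced path in $\Phi(S)$ consists of distinct vertices with consecutive ones adjacent and no other pair adjacent (multiplicities ignored). *)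

From mathcomp Require Import all_boot.
Set Implicit Arguments. Unset Strict Implicit. Unset Printing Implicit Defensive.

Definition simple_graph (T : finType) (e : rel T) : Prop :=
  symmetric e /\ irreflexive e.

Definition split_graph (T : finType) (e : rel T) (K I : {set T}) : Prop :=
  [/\ simple_graph e,
      K :&: I = set0, K :|: I = [set: T],
      {in K &, forall x y, x != y -> e x y}
    & {in I &, forall x y, ~~ e x y}].

Section Params.
Variables (T : finType) (e : rel T).
Definition nbhd (v : T) : {set T} := [set w | e v w].
Definition deg (v : T) : nat := #|nbhd v|.
Definition eta (u v : T) : nat := #|nbhd u :&: nbhd v|.
(* multiplicity of uv in the factor graph *)
Definition sigma (u v : T) : nat := (deg u - eta u v) * (deg v - eta u v).
Definition phi_adj (I : {set T}) (u v : T) : bool :=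
  [&& u \in I, v \in I, u != v & 0 < sigma u v].
Definition phi_induced_P4 (I : {set T}) (v1 v2 v3 v4 : T) : Prop :=
  [/\ [/\ v1 \in I, v2 \in I, v3 \in I & v4 \in I],
      uniq [:: v1; v2; v3; v4],
      [/\ phi_adj I v1 v2, phi_adj I v2 v3 & phi_adj I v3 v4]
    & [/\ ~~ phi_adj I v1 v3, ~~ phi_adj I v1 v4 & ~~ phi_adj I v2 v4]].
End Params.

(* Two distinct vertices of I are adjacent in the factor graph exactly when
   their neighbourhoods are incomparable under inclusion, and sigma_23 = 1
   forces d_2 = d_3.  The degree conditions then make N_2 a subset of N_4,
   hence (as N_1, N_2 are incomparable) N_1 a subset of N_4, and N_3 a subset
   of N_1; so N_3 is a subset of N_4, contradicting the edge v_3 v_4. *)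
From mathcomp Require Import all_boot.
From mathcomp Require Import zify.

Set Implicit Arguments.
Unset Strict Implicit.
Unset Printing Implicit Defensive.

Section NestedSets.
Variable T : finType.

Definition nested (A B : {set T}) : bool := (A \subset B) || (B \subset A).

Lemma nestedC (A B : {set T}) : nested A B = nested B A.
Proof. exact: orbC. Qed.

Lemma nested_card_subset (A B : {set T}) :
  nested A B -> #|A| <= #|B| -> A \subset B.
Proof.
case/orP=> [// | sBA] leAB.
by have /eqP -> : B == A by rewrite eqEcard sBA.
Qed.

Lemma nested_P4_card_contra (N1 N2 N3 N4 : {set T}) :
  ~~ nested N1 N2 -> ~~ nested N3 N4 ->
  nested N1 N3 -> nested N1 N4 -> nested N2 N4 ->
  #|N2| <= #|N1| -> #|N2| <= #|N4| -> #|N3| = #|N2| -> False.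
Proof.
move=> n12 n34 c13 c14 c24 le21 le24 eq32.
have s24 : N2 \subset N4 by exact: nested_card_subset.
have s14 : N1 \subset N4.
  case/orP: c14 => // s41.
  by rewrite /nested (subset_trans s24 s41) orbT in n12.
have s31 : N3 \subset N1.
  by apply: nested_card_subset; [rewrite nestedC | rewrite eq32].
by rewrite /nested (subset_trans s31 s14) in n34.
Qed.

End NestedSets.

Section FactorGraph.
Variables (T : finType) (e : rel T).

Lemma etaC (u v : T) : eta e u v = eta e v u.
Proof. by rewrite /eta setIC. Qed.

Lemma deg_sub_eta (u v : T) : deg e u - eta e u v = #|nbhd e u :\: nbhd e v|.
Proof. by rewrite /deg /eta -(cardsID (nbhd e v) (nbhd e u)) setIC addKn. Qed.

Lemma sigma_eq0 (u v : T) : (sigma e u v == 0) = nested (nbhd e u) (nbhd e v).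
Proof.
by rewrite /sigma deg_sub_eta etaC deg_sub_eta muln_eq0 !cards_eq0 !setD_eq0.
Qed.

Lemma phi_adjE (I : {set T}) (u v : T) : u \in I -> v \in I -> u != v ->
  phi_adj e I u v = ~~ nested (nbhd e u) (nbhd e v).
Proof. by move=> uI vI neq_uv; rewrite /phi_adj uI vI neq_uv lt0n sigma_eq0. Qed.

Lemma sigma_eq1_deg (u v : T) : sigma e u v = 1 -> deg e u = deg e v.
Proof.
move/eqP; rewrite muln_eq1 => /andP[/eqP du /eqP dv].
have etau : eta e u v <= deg e u by rewrite subset_leq_card ?subsetIl.
have etav : eta e u v <= deg e v by rewrite subset_leq_card ?subsetIr.
lia.
Qed.

End FactorGraph.

Theorem lemma4p3 (T : finType) (e : rel T) (K I : {set T}) :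
  split_graph e K I ->
  ~ (exists v1 v2 v3 v4 : T,
       [/\ phi_induced_P4 e I v1 v2 v3 v4,
           sigma e v2 v3 = 1,
           deg e v2 <= deg e v1
         & deg e v2 <= deg e v4]).
Proof.
move=> _ [v1 [v2 [v3 [v4 [[[i1 i2 i3 i4] uniq_v [a12 _ a34] [n13 n14 n24]]
  s23 le21 le24]]]]].
move: uniq_v; rewrite /= !inE !negb_or.
case/andP=> /and3P[d12 d13 d14] /andP[/andP[_ d24] /andP[d34 _]].
move: a12 a34 n13 n14 n24; rewrite !phi_adjE // !negbK => a12 a34 n13 n14 n24.
exact: nested_P4_card_contra a12 a34 n13 n14 n24 le21 le24
  (esym (sigma_eq1_deg s23)).
Qed.
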